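(* Let $d\geq 10$. There exists no smooth function $g:[0,\infty)\to\mathbb{R}$ solving $$g''(y)+\left(\frac{d-3}{y}-\frac{y}{2}\right)g'(y)-\frac{d-2}{y^2}\,g(y)\,(g(y)-1)\,(g(y)-2)=0\quad\text{for all } y>0$$ and satisfying both of the following conditions: (i) $g(0)=g'(0)=0$ and $g''(0)=a$ for some $a>0$; (ii) $\lim_{y\to\infty}g(y)=b$ for some $b\in\mathbb{R}$, and $\lim_{y\to\infty}y^3g'(y)=-2(d-2)\,b(b-1)(b-2)$.
   Context: The equation is the ordinary differential equation for self-similar shrinking solutions $w(t,r)=g(r/\sqrt{-t})$, $t<0$, of the spherically symmetric Yang–Mills heat flow $w_t=w_{rr}+\frac{d-3}{r}w_r-\frac{d-2}{r^2}w(w-1)(w-2)$ in $d$ dimensions. Here ''smooth'' means $g\in C^\infty([0,\infty))$. *)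

From Stdlib Require Import Reals Lra.
Open Scope R_scope.

Definition right_deriv_lim (f : R -> R) (x l : R) : Prop :=
  forall eps, 0 < eps -> exists delta, 0 < delta /\
    forall h, 0 < h < delta -> Rabs ((f (x + h) - f x) / h - l) < eps.

(* [smooth_nonneg_derivs g D] : g is C^infinity on [0,oo) and D n is its n-th
   derivative there (one-sided derivative at 0). Values on (-oo,0) are
   irrelevant. *)
Definition smooth_nonneg_derivs (g : R -> R) (D : nat -> R -> R) : Prop :=
  (forall y, 0 <= y -> D O y = g y) /\
  (forall n y, 0 < y -> derivable_pt_lim (D n) y (D (S n) y)) /\
  (forall n, right_deriv_lim (D n) 0 (D (S n) 0)).

Definition lim_at_infty (f : R -> R) (l : R) : Prop :=
  forall eps, 0 < eps -> exists M, forall y, M < y -> Rabs (f y - l) < eps.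

From Stdlib Require Import Reals Lra Lia Factorial.
From Coquelicot Require Import Coquelicot.
Open Scope R_scope.

(* A Lyapunov argument. For a solution g put
     F(y) = y^(d-3) e^(-y^2/4) g' ((6 - d + y^2/2) y g' + (d - 2) g (g - 1) (g - 2)).
   Along the equation
     F'(y) = y^(d-3) e^(-y^2/4) ((3 g' + y g'')^2 + g'^2 (3 (d - 2) (g - 1)^2 + d - 10)),
   which is nonnegative for d >= 10, so F is nondecreasing on (0, oo). The data at 0 give
   F -> 0 as y -> 0+, and the Gaussian factor together with the convergence of g and of
   y^3 g' give F -> 0 as y -> oo. Hence F and F' vanish identically on (0, oo); but just to
   the right of 0 we have g' > 0 (as g''(0) > 0) and g < 1, which forces F' > 0. *)

Definition gauss_weight (k : nat) (y : R) : R := y ^ k * exp (- (y * y) / 4).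

Definition cubic (u : R) : R := u * (u - 1) * (u - 2).

Definition lyapunov (d : nat) (u u1 : R -> R) (y : R) : R :=
  gauss_weight (d - 3) y * u1 y
  * ((6 - INR d + y * y / 2) * y * u1 y + (INR d - 2) * cubic (u y)).

Definition lyapunov_deriv (d : nat) (u u1 u2 : R -> R) (y : R) : R :=
  gauss_weight (d - 3) y
  * ((3 * u1 y + y * u2 y) ^ 2
     + u1 y ^ 2 * (3 * (INR d - 2) * (u y - 1) ^ 2 + INR d - 10)).

Lemma gauss_weight_pos (k : nat) (y : R) : 0 < y -> 0 < gauss_weight k y.
Proof.
intros hy; apply Rmult_lt_0_compat; [apply pow_lt; exact hy | apply exp_pos].
Qed.

Lemma is_derive_gauss_weight (k : nat) (y : R) : 0 < y ->
  is_derive (gauss_weight k) y (gauss_weight k y * (INR k / y - y / 2)).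
Proof.
intros hy; unfold gauss_weight.
auto_derive; [exact I|].
unfold Rdiv.
destruct k as [|k]; simpl; [field; lra|].
change (match k with 0%nat => 1 | S _ => INR k + 1 end) with (INR (S k)).
field; lra.
Qed.

Lemma pow_le_fact_mul_exp (n : nat) (x : R) : 0 <= x -> x ^ n <= INR (fact n) * exp x.
Proof.
intros hx.
assert (hfact : 0 < INR (fact n)) by apply INR_fact_lt_0.
assert (hterm : x ^ n / INR (fact n) <= exp x).
{ eapply Rle_trans; [|apply (exp_ge_taylor x n hx)].
  destruct n as [|n]; [simpl; lra|].
  rewrite tech5.
  assert (0 <= sum_f_R0 (fun k => x ^ k / INR (fact k)) n); [|lra].
  apply cond_pos_sum; intros k.
  apply Rdiv_le_0_compat; [now apply pow_le | apply INR_fact_lt_0]. }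
apply (Rmult_le_compat_l (INR (fact n))) in hterm; [|lra].
replace (INR (fact n) * (x ^ n / INR (fact n))) with (x ^ n) in hterm by (field; lra).
exact hterm.
Qed.

(* From e^x >= x^(k+1) / (k+1)! at x = y^2/4. *)
Lemma gauss_weight_le_inv (k : nat) (y : R) : 1 <= y ->
  gauss_weight k y <= 4 ^ S k * INR (fact (S k)) / y.
Proof.
intros hy.
set (E := exp (y * y / 4)).
assert (hE : 0 < E) by apply exp_pos.
assert (h4 : 0 < 4 ^ S k) by (apply pow_lt; lra).
assert (hexp : exp (- (y * y) / 4) = / E).
{ unfold E; rewrite <- exp_Ropp; f_equal; field. }
assert (hpow : y ^ S k <= (y * y) ^ S k) by (apply pow_incr; nra).
assert (hquart : (y * y) ^ S k = 4 ^ S k * (y * y / 4) ^ S k).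
{ rewrite <- Rpow_mult_distr; f_equal; field. }
assert (hfact := pow_le_fact_mul_exp (S k) (y * y / 4) ltac:(nra)).
unfold gauss_weight; rewrite hexp.
apply (Rmult_le_reg_r (y * E)); [nra|].
replace (y ^ k * / E * (y * E)) with (y ^ S k) by (simpl; field; lra).
replace (4 ^ S k * INR (fact (S k)) / y * (y * E))
  with (4 ^ S k * (INR (fact (S k)) * E)) by (field; lra).
rewrite hquart in hpow.
eapply Rle_trans; [exact hpow|].
apply Rmult_le_compat_l; [lra | exact hfact].
Qed.

Lemma is_lim_Rinv_p_infty : is_lim (fun y => / y) p_infty 0.
Proof. exact (is_lim_inv (fun y => y) p_infty p_infty (is_lim_id _) ltac:(discriminate)). Qed.

Lemma is_lim_gauss_weight (k : nat) : is_lim (gauss_weight k) p_infty 0.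
Proof.
set (C := 4 ^ S k * INR (fact (S k))).
apply (is_lim_le_le_loc (fun _ => 0) (fun y => C * / y)).
- exists 1; intros y hy; split.
  + apply Rlt_le, gauss_weight_pos; lra.
  + apply gauss_weight_le_inv; lra.
- apply is_lim_const.
- assert (h := is_lim_scal_l _ C _ _ is_lim_Rinv_p_infty); simpl in h.
  rewrite Rmult_0_r in h; exact h.
Qed.

Lemma is_derive_lyapunov (d : nat) (u u1 u2 : R -> R) (y : R) :
  (3 <= d)%nat -> 0 < y ->
  is_derive u y (u1 y) -> is_derive u1 y (u2 y) ->
  u2 y + ((INR d - 3) / y - y / 2) * u1 y
    - (INR d - 2) / y ^ 2 * u y * (u y - 1) * (u y - 2) = 0 ->
  is_derive (lyapunov d u u1) y (lyapunov_deriv d u u1 u2 y).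
Proof.
intros hd hy hu hu1 hode.
assert (hk : INR (d - 3) = INR d - 3) by (rewrite minus_INR by exact hd; simpl; ring).
assert (hw := is_derive_gauss_weight (d - 3) y hy).
assert (hu2 : u2 y = - ((INR d - 3) / y - y / 2) * u1 y
                     + (INR d - 2) / y ^ 2 * cubic (u y)) by (unfold cubic; lra).
unfold lyapunov, lyapunov_deriv, cubic.
auto_derive.
{ repeat split; eexists; eassumption. }
replace (Derive (fun t => gauss_weight (d - 3) t) y)
  with (gauss_weight (d - 3) y * ((INR d - 3) / y - y / 2))
  by (rewrite <- hk; symmetry; apply is_derive_unique; exact hw).
replace (Derive (fun t => u t) y) with (u1 y)
  by (symmetry; apply is_derive_unique; exact hu).
replace (Derive (fun t => u1 t) y) with (u2 y)
  by (symmetry; apply is_derive_unique; exact hu1).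
rewrite hu2; unfold cubic; field; lra.
Qed.

Lemma lyapunov_deriv_nonneg (d : nat) (u u1 u2 : R -> R) (y : R) :
  (10 <= d)%nat -> 0 < y -> 0 <= lyapunov_deriv d u u1 u2 y.
Proof.
intros hd hy.
assert (hd' : 10 <= INR d) by (apply (le_INR 10) in hd; simpl in hd; lra).
apply Rmult_le_pos; [now apply Rlt_le, gauss_weight_pos|].
apply Rplus_le_le_0_compat; [apply pow2_ge_0|].
apply Rmult_le_pos; [apply pow2_ge_0|].
pose proof (pow2_ge_0 (u y - 1)); nra.
Qed.

Lemma lyapunov_deriv_pos (d : nat) (u u1 u2 : R -> R) (y : R) :
  (10 <= d)%nat -> 0 < y -> u1 y <> 0 -> u y <> 1 ->
  0 < lyapunov_deriv d u u1 u2 y.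
Proof.
intros hd hy hu1 hu.
assert (hd' : 10 <= INR d) by (apply (le_INR 10) in hd; simpl in hd; lra).
apply Rmult_lt_0_compat; [now apply gauss_weight_pos|].
apply Rplus_le_lt_0_compat; [apply pow2_ge_0|].
apply Rmult_lt_0_compat; [apply pow2_gt_0; exact hu1|].
assert (0 < (u y - 1) ^ 2) by (apply pow2_gt_0; lra); nra.
Qed.

Lemma nondecreasing_of_is_derive_nonneg (f df : R -> R) :
  (forall y, 0 < y -> is_derive f y (df y)) -> (forall y, 0 < y -> 0 <= df y) ->
  forall x z, 0 < x -> x <= z -> f x <= f z.
Proof.
intros hf hdf x z hx [hxz | <-]; [|lra].
destruct (MVT_cor2 f df x z hxz) as [c [hc hcxz]].
- intros c hc; apply is_derive_Reals, hf; lra.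
- assert (0 <= df c) by (apply hdf; lra); nra.
Qed.

Lemma at_right_gt (x : R) : at_right x (fun y => x < y).
Proof. unfold at_right, within; apply filter_forall; intros y hy; exact hy. Qed.

Lemma nondecreasing_eq0_of_lim_0_infty (f : R -> R) :
  (forall x z, 0 < x -> x <= z -> f x <= f z) ->
  filterlim f (at_right 0) (locally 0) -> is_lim f p_infty 0 ->
  forall y, 0 < y -> f y = 0.
Proof.
intros hmono h0 hinf y hy.
apply Rle_antisym.
- assert (hle : Rbar_le (f y) 0); [|exact hle].
  apply (filterlim_le (F := Rbar_locally p_infty) (fun _ => f y) f).
  + exists y; intros z hz; apply hmono; lra.
  + apply filterlim_const.
  + exact hinf.
- assert (hle : Rbar_le 0 (f y)); [|exact hle].
  apply (filterlim_le (F := at_right 0) f (fun _ => f y)).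
  + apply filter_imp with (fun z => 0 < z /\ z < y).
    * intros z [hz hzy]; apply hmono; lra.
    * apply filter_and; [apply at_right_gt | apply filter_le_within, open_lt, hy].
  + exact h0.
  + apply filterlim_const.
Qed.

Lemma is_derive_eq0_of_eq0_on_pos (f : R -> R) (y l : R) :
  (forall t, 0 < t -> f t = 0) -> 0 < y -> is_derive f y l -> l = 0.
Proof.
intros hf hy hl.
assert (h0 : is_derive f y 0).
{ apply (is_derive_ext_loc (fun _ => 0)); [|apply (is_derive_const (V := R_NormedModule))].
  apply filter_imp with (fun t => 0 < t); [intros t ht; symmetry; apply hf, ht|].
  apply open_gt, hy. }
rewrite <- (is_derive_unique _ _ _ hl); exact (is_derive_unique _ _ _ h0).
Qed.

Lemma is_lim_of_lim_at_infty (f : R -> R) (l : R) :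
  lim_at_infty f l -> is_lim f p_infty l.
Proof.
intros hf; apply is_lim_spec; intros eps.
destruct (hf eps (cond_pos eps)) as [M hM]; exists M; exact hM.
Qed.

Lemma right_deriv_lim_right_continuous (f : R -> R) (x l : R) :
  right_deriv_lim f x l -> filterlim f (at_right x) (locally (f x)).
Proof.
intros hf P [eps hP].
destruct (hf 1 Rlt_0_1) as [delta [hdelta hq]].
assert (hl : 0 < Rabs l + 1) by (pose proof (Rabs_pos l); lra).
assert (hr : 0 < Rmin delta (eps / (Rabs l + 1))).
{ apply Rmin_glb_lt; [exact hdelta | apply Rdiv_lt_0_compat; [apply cond_pos | exact hl]]. }
exists (mkposreal _ hr); intros y; change R in y; intros hy hxy; apply hP.
change (Rabs (f y - f x) < eps).
change (Rabs (y - x) < Rmin delta (eps / (Rabs l + 1))) in hy.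
rewrite Rabs_right in hy by lra.
assert (hyd : y - x < delta) by (eapply Rlt_le_trans; [exact hy | apply Rmin_l]).
assert (hye : (y - x) * (Rabs l + 1) < eps).
{ apply (Rmult_lt_reg_r (/ (Rabs l + 1))); [now apply Rinv_0_lt_compat|].
  rewrite Rmult_assoc, Rinv_r, Rmult_1_r by lra.
  eapply Rlt_le_trans; [exact hy | apply Rmin_r]. }
specialize (hq (y - x) ltac:(lra)).
replace (x + (y - x)) with y in hq by ring.
replace (f y - f x) with ((y - x) * ((f y - f x) / (y - x))) by (field; lra).
rewrite Rabs_mult, (Rabs_right (y - x)) by lra.
assert (Rabs ((f y - f x) / (y - x)) < Rabs l + 1).
{ replace ((f y - f x) / (y - x)) with (((f y - f x) / (y - x) - l) + l) by ring.
  eapply Rle_lt_trans; [apply Rabs_triang | lra]. }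
nra.
Qed.

Lemma right_deriv_lim_pos_at_right (f : R -> R) (x l : R) :
  f x = 0 -> 0 < l -> right_deriv_lim f x l -> at_right x (fun y => 0 < f y).
Proof.
intros hfx hl hf.
destruct (hf l hl) as [delta [hdelta hq]].
exists (mkposreal _ hdelta); intros y; change R in y; intros hy hxy.
change (Rabs (y - x) < delta) in hy; rewrite Rabs_right in hy by lra.
specialize (hq (y - x) ltac:(lra)).
replace (x + (y - x)) with y in hq by ring.
rewrite hfx, Rminus_0_r in hq.
apply Rabs_def2 in hq.
assert (hpos : 0 < f y / (y - x)) by lra.
replace (f y) with (f y / (y - x) * (y - x)) by (field; lra).
apply Rmult_lt_0_compat; lra.
Qed.

Lemma filterlim_Rmult {T : Type} {F : (T -> Prop) -> Prop} {FF : Filter F}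
  (f g : T -> R) (a b : R) :
  filterlim f F (locally a) -> filterlim g F (locally b) ->
  filterlim (fun x => f x * g x) F (locally (a * b)).
Proof. intros hf hg; exact (filterlim_comp_2 _ _ _ hf hg (filterlim_mult a b)). Qed.

Lemma filterlim_Rplus {T : Type} {F : (T -> Prop) -> Prop} {FF : Filter F}
  (f g : T -> R) (a b : R) :
  filterlim f F (locally a) -> filterlim g F (locally b) ->
  filterlim (fun x => f x + g x) F (locally (a + b)).
Proof. intros hf hg; exact (filterlim_comp_2 _ _ _ hf hg (filterlim_plus a b)). Qed.

Lemma filterlim_Rmult_0_l {T : Type} {F : (T -> Prop) -> Prop} {FF : Filter F}
  (f g : T -> R) (b : R) :
  filterlim f F (locally 0) -> filterlim g F (locally b) ->
  filterlim (fun x => f x * g x) F (locally 0).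
Proof. intros hf hg; rewrite <- (Rmult_0_l b); exact (filterlim_Rmult f g 0 b hf hg). Qed.

Lemma filterlim_Rmult_0_r {T : Type} {F : (T -> Prop) -> Prop} {FF : Filter F}
  (f g : T -> R) (a : R) :
  filterlim f F (locally a) -> filterlim g F (locally 0) ->
  filterlim (fun x => f x * g x) F (locally 0).
Proof. intros hf hg; rewrite <- (Rmult_0_r a); exact (filterlim_Rmult f g a 0 hf hg). Qed.

(* [eassumption] comes first so that a function with a known limit is not unfolded
   by [apply] into its defining product. *)
Ltac filterlim_arith :=
  repeat first [ eassumption | apply filterlim_const
               | apply filterlim_Rmult | apply filterlim_Rplus ].

Lemma filterlim_lyapunov_right_0 (d : nat) (u u1 : R -> R) (u0 : R) :
  filterlim u (at_right 0) (locally u0) -> filterlim u1 (at_right 0) (locally 0) ->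
  filterlim (lyapunov d u u1) (at_right 0) (locally 0).
Proof.
intros hu hu1.
assert (hid : filterlim (fun y => y) (at_right 0) (locally 0)).
{ apply (filterlim_filter_le_1 (F := locally 0)); [apply filter_le_within | apply filterlim_id]. }
assert (hw : filterlim (gauss_weight (d - 3)) (at_right 0)
               (locally (gauss_weight (d - 3) 0))).
{ apply (filterlim_filter_le_1 (F := locally 0)); [apply filter_le_within|].
  apply (ex_derive_continuous (V := R_NormedModule)).
  unfold gauss_weight; auto_derive; exact I. }
unfold lyapunov.
eapply filterlim_Rmult_0_l; [eapply filterlim_Rmult_0_r; [exact hw | exact hu1]|].
unfold cubic, Rdiv, Rminus; filterlim_arith.
Qed.

Lemma is_lim_lyapunov_p_infty (d : nat) (u u1 : R -> R) (b L : R) :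
  (6 <= d)%nat -> is_lim u p_infty b -> is_lim (fun y => y ^ 3 * u1 y) p_infty L ->
  is_lim (lyapunov d u u1) p_infty 0.
Proof.
intros hd hu hL.
assert (hinv := is_lim_Rinv_p_infty).
assert (hw := is_lim_gauss_weight (d - 6)).
apply (is_lim_ext_loc (fun y => gauss_weight (d - 6) y * (y ^ 3 * u1 y)
  * (((6 - INR d) * (/ y * / y) + / 2) * (y ^ 3 * u1 y) + (INR d - 2) * cubic (u y)))).
{ exists 0; intros y hy; unfold lyapunov, gauss_weight.
  replace (d - 3)%nat with (d - 6 + 3)%nat by lia.
  rewrite pow_add; field; lra. }
eapply filterlim_Rmult_0_l; [eapply filterlim_Rmult_0_l; [exact hw | exact hL]|].
unfold cubic, Rminus; filterlim_arith.
Qed.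

Section Profile.

Variables (d : nat) (g : R -> R) (D : nat -> R -> R) (a b : R).
Hypothesis hd : (10 <= d)%nat.
Hypothesis hD0 : forall y, 0 <= y -> D 0%nat y = g y.
Hypothesis hder : forall n y, 0 < y -> derivable_pt_lim (D n) y (D (S n) y).
Hypothesis hright : forall n, right_deriv_lim (D n) 0 (D (S n) 0).
Hypothesis hode : forall y, 0 < y ->
  D 2%nat y + ((INR d - 3) / y - y / 2) * D 1%nat y
  - (INR d - 2) / (y ^ 2) * g y * (g y - 1) * (g y - 2) = 0.
Hypothesis hg0 : g 0 = 0.
Hypothesis hD10 : D 1%nat 0 = 0.
Hypothesis ha : 0 < a.
Hypothesis hD20 : D 2%nat 0 = a.
Hypothesis hb : lim_at_infty g b.
Hypothesis hL : lim_at_infty (fun y => y ^ 3 * D 1%nat y)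
                  (-2 * (INR d - 2) * b * (b - 1) * (b - 2)).

Lemma profile_is_derive_lyapunov (y : R) : 0 < y ->
  is_derive (lyapunov d (D 0%nat) (D 1%nat)) y
    (lyapunov_deriv d (D 0%nat) (D 1%nat) (D 2%nat) y).
Proof.
intros hy; apply is_derive_lyapunov; [lia | exact hy | | |].
- apply is_derive_Reals, hder, hy.
- apply is_derive_Reals, hder, hy.
- rewrite hD0 by lra; exact (hode y hy).
Qed.

Lemma profile_lyapunov_eq0 (y : R) : 0 < y -> lyapunov d (D 0%nat) (D 1%nat) y = 0.
Proof.
apply nondecreasing_eq0_of_lim_0_infty.
- apply (nondecreasing_of_is_derive_nonneg _ _ profile_is_derive_lyapunov).
  intros t ht; apply lyapunov_deriv_nonneg; [exact hd | exact ht].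
- apply (filterlim_lyapunov_right_0 _ _ _ (D 0%nat 0)).
  + apply right_deriv_lim_right_continuous with (1 := hright 0%nat).
  + rewrite <- hD10 at 2; apply right_deriv_lim_right_continuous with (1 := hright 1%nat).
- apply (is_lim_lyapunov_p_infty _ _ _ b (-2 * (INR d - 2) * b * (b - 1) * (b - 2))).
  + lia.
  + apply (is_lim_ext_loc g); [exists 0; intros t ht; symmetry; apply hD0; lra|].
    apply is_lim_of_lim_at_infty, hb.
  + apply is_lim_of_lim_at_infty, hL.
Qed.

Lemma profile_increasing_below_1_near_0 :
  exists y, 0 < y /\ 0 < D 1%nat y /\ D 0%nat y < 1.
Proof.
apply (filter_ex (F := at_right 0)); repeat apply filter_and.
- apply at_right_gt.
- apply (right_deriv_lim_pos_at_right _ 0 a hD10 ha); rewrite <- hD20; apply hright.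
- apply (right_deriv_lim_right_continuous _ _ _ (hright 0%nat) (fun u => u < 1)), open_lt.
  rewrite hD0, hg0 by lra; lra.
Qed.

End Profile.

Theorem theorem2 (d : nat) (hd : (10 <= d)%nat) :
  ~ (exists (g : R -> R) (D : nat -> R -> R),
       smooth_nonneg_derivs g D /\
       (forall y, 0 < y ->
          D 2%nat y + ((INR d - 3) / y - y / 2) * D 1%nat y
          - (INR d - 2) / (y ^ 2) * g y * (g y - 1) * (g y - 2) = 0) /\
       (g 0 = 0 /\ D 1%nat 0 = 0 /\ exists a, 0 < a /\ D 2%nat 0 = a) /\
       (exists b, lim_at_infty g b /\
          lim_at_infty (fun y => y ^ 3 * D 1%nat y)
                       (-2 * (INR d - 2) * b * (b - 1) * (b - 2)))).
Proof.
intros [g [D [[hD0 [hder hright]] [hode [[hg0 [hD10 [a [ha hD20]]]] [b [hb hL]]]]]]].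
destruct (profile_increasing_below_1_near_0 g D a) as [y0 [hy0 [hD1y0 hD0y0]]];
  try assumption.
apply (Rlt_not_eq 0 (lyapunov_deriv d (D 0%nat) (D 1%nat) (D 2%nat) y0)).
- apply lyapunov_deriv_pos; [exact hd | exact hy0 | lra | lra].
- symmetry; apply (is_derive_eq0_of_eq0_on_pos (lyapunov d (D 0%nat) (D 1%nat)) y0).
  + eapply profile_lyapunov_eq0; eassumption.
  + exact hy0.
  + eapply profile_is_derive_lyapunov; eassumption.
Qed.
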